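(* For every constant $c>0$ there exist constants $\epsilon>0$ and $c'>0$ such that for every odd $n$, with $\alpha=c\sqrt n$ and the hockey stick function $hs_\alpha(x)=\min\big(\alpha,\frac{2\alpha}{n}\sum_{i=1}^nx_i\big)$ on $\{0,1\}^n$, it holds that $\mathcal D^{\to,U}_{\epsilon}(hs_\alpha^+)\ge c'n$.
   Context: The XOR-function of $f$ is $f^+(x,y)=f(x+y)$ (coordinatewise addition mod 2). Distributional one-way communication complexity under the uniform distribution: $\mathcal D^{\to,U}_\epsilon(f^+)$ is the minimum, over deterministic one-way protocols $\Pi$ in which Alice (holding $x$) sends a single message to Bob (holding $y$) who outputs a real number $\Pi(x,y)$ depending only on the message and $y$, satisfying $\mathbb E_{x,y\sim U(\mathbb F_2^n)}[(\Pi(x,y)-f^+(x,y))^2]\le\epsilon$, of the maximum message length in bits. *)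

From Stdlib Require Import Reals List.
Import ListNotations.
Open Scope R_scope.

(* Points of F_2^n, represented as bit lists of length n. *)
Fixpoint cube (n : nat) : list (list bool) :=
  match n with
  | O => [ [] ]
  | S m => map (cons false) (cube m) ++ map (cons true) (cube m)
  end.

Fixpoint xorv (x y : list bool) : list bool :=
  match x, y with
  | a :: x', b :: y' => xorb a b :: xorv x' y'
  | _, _ => []
  end.

Definition weight (x : list bool) : R :=
  fold_right (fun (b : bool) s => (if b then 1 else 0) + s) 0 x.

Definition sumR {A : Type} (l : list A) (f : A -> R) : R :=
  fold_right (fun a s => f a + s) 0 l.

Definition hs (n : nat) (alpha : R) (x : list bool) : R :=
  Rmin alpha (2 * alpha / INR n * weight x).

(* XOR-function f^+(x,y) = f(x+y) *)
Definition xor_fun (f : list bool -> R) (x y : list bool) : R := f (xorv x y).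

(* A deterministic one-way protocol: Alice sends the bit string M x,
   Bob outputs B (M x) y.  Its expected squared error under the uniform
   distribution on F_2^n x F_2^n: *)
Definition proto_err (n : nat) (F : list bool -> list bool -> R)
  (M : list bool -> list bool) (B : list bool -> list bool -> R) : R :=
  / (2 ^ n * 2 ^ n) *
  sumR (cube n) (fun x => sumR (cube n) (fun y => (B (M x) y - F x y) ^ 2)).

Definition proto_cost (n : nat) (M : list bool -> list bool) : nat :=
  fold_right (fun x m => Nat.max (length (M x)) m) 0%nat (cube n).

(* D^{->,U}_eps(F) >= k  iff every protocol with error <= eps costs >= k *)
Definition D_one_way_ge (n : nat) (eps : R) (F : list bool -> list bool -> R)
  (k : R) : Prop :=
  forall (M : list bool -> list bool) (B : list bool -> list bool -> R),
    proto_err n F M B <= eps -> k <= INR (proto_cost n M).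

(* Write N = 2^n and let  e(x) = sum_y (Bob's output - hs(x+y))^2  be the
   error of the protocol on Alice's input x.  With eps = c^2/1024:
   1. (Markov) at least 15N/16 inputs x are "good": e(x) <= c^2 N / 64.
   2. (Separation) if |u| >= n/4 then  sum_z (hs(u+z) - hs(z))^2 >= c^2 N/8.
      Splitting z into its part on the support of u (weight a) and off it
      (weight b), the two clipped weights differ by |2a - |u||/2 whenever
      b is at most half of the off-support coordinates; the variance of a
      and the symmetry of b give the bound.
   3. Hence two good inputs receiving the same message are at Hamming
      distance < n/4, so each message is shared by at most the volume
      (337/192)^n of such a Hamming ball.
   4. Messages of length <= k number 2^(k+1) - 1, so
      15N/16 <= (2^(k+1) - 1) (337/192)^n, which forces k >= n/16.
   The file develops finite sums, the Boolean cube, Hamming weights, the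
   separation estimate, the ball volume and the counting of messages, then
   proves the theorem. *)

From Stdlib Require Import Reals Lra Lia Psatz List Bool Classical.
Import ListNotations.
Open Scope R_scope.

Lemma sumR_nil {A} (f : A -> R) : sumR [] f = 0.
Proof. reflexivity. Qed.

Lemma sumR_cons {A} (a : A) (l : list A) (f : A -> R) :
  sumR (a :: l) f = f a + sumR l f.
Proof. reflexivity. Qed.

Lemma sumR_app {A} (l1 l2 : list A) (f : A -> R) :
  sumR (l1 ++ l2) f = sumR l1 f + sumR l2 f.
Proof.
  induction l1 as [|a l1 IH]; cbn [app]; rewrite ?sumR_nil, ?sumR_cons; lra.
Qed.

Lemma sumR_map {A B} (g : A -> B) (l : list A) (f : B -> R) :
  sumR (map g l) f = sumR l (fun a => f (g a)).
Proof.
  induction l as [|a l IH]; cbn [map]; rewrite ?sumR_cons, ?IH; reflexivity.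
Qed.

Lemma sumR_ext {A} (l : list A) (f g : A -> R) :
  (forall a, In a l -> f a = g a) -> sumR l f = sumR l g.
Proof.
  induction l as [|a l IH]; intros H; [reflexivity|].
  rewrite !sumR_cons, H, IH; auto; [intros; apply H|]; simpl; auto.
Qed.

Lemma sumR_le {A} (l : list A) (f g : A -> R) :
  (forall a, In a l -> f a <= g a) -> sumR l f <= sumR l g.
Proof.
  induction l as [|a l IH]; intros H; rewrite ?sumR_nil, ?sumR_cons; [lra|].
  assert (f a <= g a) by (apply H; now left).
  assert (sumR l f <= sumR l g) by (apply IH; intros; apply H; now right).
  lra.
Qed.

Lemma sumR_plus {A} (l : list A) (f g : A -> R) :
  sumR l (fun a => f a + g a) = sumR l f + sumR l g.
Proof. induction l as [|a l IH]; rewrite ?sumR_nil, ?sumR_cons, ?IH; lra. Qed.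

Lemma sumR_scal {A} (l : list A) (k : R) (f : A -> R) :
  sumR l (fun a => k * f a) = k * sumR l f.
Proof. induction l as [|a l IH]; rewrite ?sumR_nil, ?sumR_cons, ?IH; lra. Qed.

Lemma sumR_const {A} (l : list A) (k : R) :
  sumR l (fun _ => k) = INR (length l) * k.
Proof.
  induction l as [|a l IH]; cbn [length]; rewrite ?sumR_nil, ?sumR_cons, ?IH,
    ?S_INR; simpl; lra.
Qed.

Lemma sumR_nonneg {A} (l : list A) (f : A -> R) :
  (forall a, In a l -> 0 <= f a) -> 0 <= sumR l f.
Proof.
  intros H. rewrite <- (Rmult_0_r (INR (length l))), <- sumR_const.
  now apply sumR_le.
Qed.

Lemma sumR_term_le {A} (l : list A) (f : A -> R) (a : A) :
  In a l -> (forall b, In b l -> 0 <= f b) -> f a <= sumR l f.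
Proof.
  induction l as [|b l IH]; intros Ha Hpos; [destruct Ha|rewrite sumR_cons].
  destruct Ha as [<-|Ha].
  - assert (0 <= sumR l f) by (apply sumR_nonneg; intros; apply Hpos; now right).
    lra.
  - assert (0 <= f b) by (apply Hpos; now left).
    assert (f a <= sumR l f) by (apply IH; auto; intros; apply Hpos; now right).
    lra.
Qed.

Lemma sumR_swap {A B} (l1 : list A) (l2 : list B) (f : A -> B -> R) :
  sumR l1 (fun a => sumR l2 (fun b => f a b)) =
  sumR l2 (fun b => sumR l1 (fun a => f a b)).
Proof.
  induction l1 as [|a l1 IH].
  - rewrite sumR_nil. change (0 = sumR l2 (fun _ => 0)).
    rewrite sumR_const. lra.
  - rewrite sumR_cons, IH, <- sumR_plus. reflexivity.
Qed.

Lemma sumR_sq_diff_le {A} (l : list A) (p q b : A -> R) :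
  sumR l (fun y => (p y - q y) ^ 2) <=
  2 * sumR l (fun y => (b y - p y) ^ 2) + 2 * sumR l (fun y => (b y - q y) ^ 2).
Proof.
  rewrite <- !sumR_scal, <- sumR_plus. apply sumR_le. intros y _.
  pose proof (pow2_ge_0 (2 * b y - p y - q y)). simpl in *. nra.
Qed.

Lemma markov_count {A} (l : list A) (e : A -> R) (T : R) :
  0 < T -> (forall x, In x l -> 0 <= e x) ->
  INR (length l) - sumR l e / T <= sumR l (fun x => if Rle_dec (e x) T then 1 else 0).
Proof.
  intros HT He.
  assert (Hbad : sumR l (fun x => if Rle_dec (e x) T then 0 else 1) * T <= sumR l e).
  { rewrite Rmult_comm, <- sumR_scal. apply sumR_le. intros x Hx.
    specialize (He x Hx). destruct Rle_dec; lra. }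
  assert (Hsplit : sumR l (fun x => if Rle_dec (e x) T then 1 else 0) +
                   sumR l (fun x => if Rle_dec (e x) T then 0 else 1) = INR (length l)).
  { rewrite <- sumR_plus, <- (Rmult_1_r (INR _)), <- sumR_const.
    apply sumR_ext. intros x _. destruct Rle_dec; lra. }
  assert (sumR l (fun x => if Rle_dec (e x) T then 0 else 1) <= sumR l e / T).
  { apply (Rmult_le_reg_r T); [exact HT|]. unfold Rdiv.
    rewrite Rmult_assoc, Rinv_l, Rmult_1_r by lra. exact Hbad. }
  lra.
Qed.

Lemma cube_elem_length (n : nat) (x : list bool) : In x (cube n) -> length x = n.
Proof.
  revert x; induction n as [|n IH]; simpl; intros x H.
  - destruct H as [<-|[]]; reflexivity.
  - apply in_app_or in H.
    destruct H as [H|H]; apply in_map_iff in H; destruct H as [y [<- Hy]];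
      simpl; f_equal; auto.
Qed.

Lemma in_cube (x : list bool) : In x (cube (length x)).
Proof.
  induction x as [|b x IH]; simpl; auto.
  apply in_or_app. destruct b; [right|left]; now apply in_map.
Qed.

Lemma length_cube (n : nat) : length (cube n) = (2 ^ n)%nat.
Proof. induction n; simpl; auto. rewrite length_app, !length_map, IHn. lia. Qed.

Lemma sumR_cube_S (n : nat) (f : list bool -> R) :
  sumR (cube (S n)) f =
  sumR (cube n) (fun z => f (false :: z)) + sumR (cube n) (fun z => f (true :: z)).
Proof. simpl. now rewrite sumR_app, !sumR_map. Qed.

Lemma sumR_cube_const (n : nat) (k : R) : sumR (cube n) (fun _ => k) = 2 ^ n * k.
Proof. rewrite sumR_const, length_cube, pow_INR. simpl (INR 2).
  replace (1 + 1) with 2 by lra. reflexivity.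
Qed.

Lemma xorv_length (a y : list bool) :
  length a = length y -> length (xorv a y) = length a.
Proof. revert y; induction a; destruct y; simpl; intros; try discriminate; auto. Qed.

(* Translating by a fixed vector permutes the cube. *)
Lemma sumR_cube_translate (n : nat) (a : list bool) (f : list bool -> R) :
  length a = n -> sumR (cube n) (fun y => f (xorv a y)) = sumR (cube n) f.
Proof.
  revert a f; induction n as [|n IH]; intros a f Ha.
  - destruct a; [reflexivity|discriminate].
  - destruct a as [|b a]; [discriminate|]. injection Ha as Ha.
    rewrite !sumR_cube_S. cbn [xorv].
    rewrite (IH a (fun z => f (xorb b false :: z)) Ha),
            (IH a (fun z => f (xorb b true :: z)) Ha).
    destruct b; simpl; lra.
Qed.

Lemma xorv_cancel (a b y : list bool) :
  length b = length a -> length b = length y ->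
  xorv (xorv b a) (xorv b y) = xorv a y.
Proof.
  revert a y; induction b as [|t b IH]; intros [|s a] [|r y] Ha Hy;
    try discriminate; simpl in *; auto.
  rewrite IH by lia. now destruct t, s, r.
Qed.

Fixpoint hweight (z : list bool) : nat :=
  match z with
  | [] => 0%nat
  | b :: z' => ((if b then 1 else 0) + hweight z')%nat
  end.

Lemma weight_cons (b : bool) (z : list bool) :
  weight (b :: z) = (if b then 1 else 0) + weight z.
Proof. reflexivity. Qed.

Lemma weight_hweight (z : list bool) : weight z = INR (hweight z).
Proof.
  induction z as [|b z IH]; [reflexivity|].
  rewrite weight_cons, IH; cbn [hweight]. rewrite plus_INR. destruct b; simpl; lra.
Qed.

Lemma hweight_le_length (z : list bool) : (hweight z <= length z)%nat.
Proof. induction z as [|b z IH]; simpl; auto. destruct b; lia. Qed.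

Lemma weight_nonneg (z : list bool) : 0 <= weight z.
Proof. rewrite weight_hweight. apply pos_INR. Qed.

Lemma sumR_cube_S_weight (d : nat) (h : R -> R) :
  sumR (cube (S d)) (fun s => h (weight s)) =
  sumR (cube d) (fun s => h (weight s)) + sumR (cube d) (fun s => h (1 + weight s)).
Proof.
  rewrite sumR_cube_S. f_equal. apply sumR_ext. intros s _.
  rewrite weight_cons. f_equal. lra.
Qed.

Lemma sumR_centered_weight_sq (d : nat) :
  sumR (cube d) (fun s => (2 * weight s - INR d) ^ 2) = INR d * 2 ^ d.
Proof.
  induction d as [|d IH]; [simpl; lra|].
  rewrite (sumR_cube_S_weight d (fun w => (2 * w - INR (S d)) ^ 2)), <- sumR_plus.
  cbv beta. rewrite S_INR.
  transitivity (sumR (cube d) (fun s => 2 * (2 * weight s - INR d) ^ 2 + 2)).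
  { apply sumR_ext. intros. simpl. lra. }
  rewrite sumR_plus, sumR_scal, IH, sumR_cube_const. simpl. lra.
Qed.

(* At least half of the cube has weight at most m/2 (complement symmetry). *)
Lemma sumR_lower_half_weight (m : nat) :
  2 ^ m / 2 <= sumR (cube m) (fun t => if Rle_dec (2 * weight t) (INR m) then 1 else 0).
Proof.
  set (ones := repeat true m).
  assert (Hcompl : forall t, length t = m -> weight (xorv ones t) = INR m - weight t).
  { subst ones. induction m as [|m IH]; intros [|b t] Ht; try discriminate.
    - simpl; lra.
    - injection Ht as Ht. cbn [repeat xorv]. rewrite !weight_cons, IH, S_INR by exact Ht.
      destruct b; simpl; lra. }
  set (low := fun t => if Rle_dec (2 * weight t) (INR m) then 1 else 0).
  assert (Hcover : sumR (cube m) (fun _ => 1) <=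
                   sumR (cube m) (fun t => low (xorv ones t) + low t)).
  { apply sumR_le. intros t Ht. unfold low.
    rewrite Hcompl by now apply cube_elem_length. destruct Rle_dec, Rle_dec; lra. }
  rewrite sumR_plus, sumR_cube_translate, sumR_cube_const in Hcover
    by apply repeat_length.
  unfold low in *. lra.
Qed.

(** Splitting a point z of the cube along the support of a fixed vector u:
    [common a u z] counts the coordinates i with u_i = a and z_i = 1. *)

Fixpoint common (a : bool) (u z : list bool) : R :=
  match u, z with
  | b :: u', t :: z' => if Bool.eqb b a && t then 1 + common a u' z' else common a u' z'
  | _, _ => 0
  end.

Lemma weight_split (u z : list bool) :
  length u = length z -> weight z = common true u z + common false u z.
Proof.
  revert z; induction u as [|b u IH]; intros [|t z] Hl; try discriminate; [simpl; lra|].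
  injection Hl as Hl. rewrite weight_cons, (IH z Hl). destruct b, t; simpl; lra.
Qed.

Lemma weight_xorv_split (u z : list bool) :
  length u = length z ->
  weight (xorv u z) = (weight u - common true u z) + common false u z.
Proof.
  revert z; induction u as [|b u IH]; intros [|t z] Hl; try discriminate;
    [simpl; lra|].
  injection Hl as Hl. cbn [xorv]. rewrite !weight_cons, (IH z Hl).
  destruct b, t; simpl; lra.
Qed.

Lemma common_nonneg (a : bool) (u z : list bool) : 0 <= common a u z.
Proof.
  revert z; induction u as [|b u IH]; intros [|t z]; simpl; try lra.
  specialize (IH z). destruct (Bool.eqb b a && t); lra.
Qed.

Lemma common_true_le_weight (u z : list bool) : common true u z <= weight u.
Proof.
  revert z; induction u as [|b u IH]; intros [|t z]; cbn [common].
  - simpl; lra.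
  - simpl; lra.
  - apply weight_nonneg.
  - specialize (IH z). rewrite weight_cons. destruct b, t; cbn [Bool.eqb andb]; lra.
Qed.

(* The two halves of the split are independent: the cube over u's length is
   the product of the cubes on the support of u and off it. *)
Lemma sumR_cube_split_support (u : list bool) (f g : R -> R) :
  sumR (cube (length u)) (fun z => f (common true u z) * g (common false u z)) =
  sumR (cube (hweight u)) (fun s => f (weight s)) *
  sumR (cube (length u - hweight u)) (fun t => g (weight t)).
Proof.
  revert f g; induction u as [|b u IH]; intros f g; [simpl; ring|].
  cbn [length]. rewrite sumR_cube_S. destruct b; cbn [common hweight Bool.eqb andb].
  - rewrite (IH f g), (IH (fun x => f (1 + x)) g).
    replace (1 + hweight u)%nat with (S (hweight u)) by lia. cbn [Nat.sub].
    rewrite sumR_cube_S_weight. ring.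
  - rewrite (IH f g), (IH f (fun x => g (1 + x))).
    rewrite Nat.add_0_l, Nat.sub_succ_l by apply hweight_le_length.
    rewrite sumR_cube_S_weight. ring.
Qed.

(** * The separation estimate for the hockey stick function *)

(* Pointwise: with |z| = a + b and |u + z| = d - a + b, where b is at most half
   of the n - d off-support coordinates, clipping at n/2 loses at most half of
   the difference 2a - d. *)
Lemma clipped_difference_lower_bound (n a b d : R) :
  0 <= a <= d -> 0 <= b -> 2 * b <= n - d ->
  (2 * a - d) ^ 2 / 4 <= (Rmin (d - a + b) (n / 2) - Rmin (a + b) (n / 2)) ^ 2.
Proof.
  intros Ha Hb Hn. pose proof (pow2_ge_0 (2 * a - d)). unfold Rmin.
  destruct (Rle_dec (d - a + b) (n / 2)), (Rle_dec (a + b) (n / 2)); simpl in *; nra.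
Qed.

Lemma clipped_weight_shift_energy (u : list bool) :
  weight u * 2 ^ length u / 8 <=
  sumR (cube (length u)) (fun z =>
    (Rmin (weight (xorv u z)) (INR (length u) / 2) - Rmin (weight z) (INR (length u) / 2)) ^ 2).
Proof.
  set (n := length u). set (w := hweight u). set (d := weight u).
  set (f := fun a => (2 * a - d) ^ 2 / 4).
  set (g := fun b => if Rle_dec (2 * b) (INR (n - w)) then 1 else 0).
  assert (Hpoint : sumR (cube n) (fun z => f (common true u z) * g (common false u z)) <=
    sumR (cube n) (fun z =>
      (Rmin (weight (xorv u z)) (INR n / 2) - Rmin (weight z) (INR n / 2)) ^ 2)).
  { apply sumR_le. intros z Hz.
    assert (Hl : length u = length z) by (symmetry; now apply cube_elem_length).
    rewrite (weight_split u z Hl), (weight_xorv_split u z Hl). unfold f, g.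
    destruct Rle_dec as [Hb|Hb]; [|rewrite Rmult_0_r; apply pow2_ge_0].
    rewrite Rmult_1_r. apply clipped_difference_lower_bound.
    - split; [apply common_nonneg|apply common_true_le_weight].
    - apply common_nonneg.
    - rewrite minus_INR in Hb by apply hweight_le_length.
      unfold w in Hb. rewrite <- weight_hweight in Hb. exact Hb. }
  unfold n in Hpoint. rewrite sumR_cube_split_support in Hpoint. fold w n in Hpoint.
  assert (Hvar : sumR (cube w) (fun s => f (weight s)) = INR w * 2 ^ w / 4).
  { unfold f, d. rewrite weight_hweight. fold w.
    rewrite <- sumR_centered_weight_sq. unfold Rdiv.
    rewrite Rmult_comm, <- sumR_scal. apply sumR_ext. intros. lra. }
  assert (Hhalf : 2 ^ (n - w) / 2 <= sumR (cube (n - w)) (fun t => g (weight t)))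
    by apply sumR_lower_half_weight.
  rewrite Hvar in Hpoint.
  assert (Hsplit : 2 ^ n = 2 ^ w * 2 ^ (n - w)).
  { rewrite <- pow_add. f_equal. unfold n, w. pose proof (hweight_le_length u). lia. }
  assert (0 <= INR w * 2 ^ w / 4).
  { apply Rmult_le_pos; [apply Rmult_le_pos; [apply pos_INR|apply pow_le]|]; lra. }
  unfold d. rewrite weight_hweight, Hsplit. fold w. nra.
Qed.

Lemma hs_clipped (n : nat) (alpha : R) (z : list bool) :
  (0 < n)%nat -> 0 < alpha ->
  hs n alpha z = (2 * alpha / INR n) * Rmin (weight z) (INR n / 2).
Proof.
  intros Hn Ha. pose proof (lt_0_INR _ Hn).
  set (k := 2 * alpha / INR n).
  assert (Hk : 0 < k) by (apply Rdiv_lt_0_compat; lra).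
  assert (Halpha : alpha = k * (INR n / 2)) by (unfold k; field; lra).
  unfold hs. fold k. rewrite Halpha at 1. unfold Rmin.
  destruct Rle_dec, Rle_dec; nra.
Qed.

Lemma hockey_stick_separation (n : nat) (c : R) (x x0 : list bool) :
  (0 < n)%nat -> 0 < c -> length x = n -> length x0 = n ->
  INR n <= 4 * weight (xorv x0 x) ->
  c ^ 2 * 2 ^ n / 8 <=
  sumR (cube n) (fun y => (hs n (c * sqrt (INR n)) (xorv x y) -
                           hs n (c * sqrt (INR n)) (xorv x0 y)) ^ 2).
Proof.
  intros Hn Hc Hx Hx0 Hfar.
  pose proof (lt_0_INR _ Hn) as HnR.
  pose proof (sqrt_lt_R0 _ HnR) as Hs.
  set (alpha := c * sqrt (INR n)).
  assert (Halpha : 0 < alpha) by (unfold alpha; nra).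
  set (k := 2 * alpha / INR n).
  set (u := xorv x0 x) in Hfar |- *.
  assert (Hu : length u = n) by (unfold u; rewrite xorv_length; lia).
  set (h := fun z => Rmin (weight z) (INR n / 2)).
  assert (Htranslate :
    sumR (cube n) (fun y => (hs n alpha (xorv x y) - hs n alpha (xorv x0 y)) ^ 2) =
    k ^ 2 * sumR (cube n) (fun z => (h (xorv u z) - h z) ^ 2)).
  { rewrite <- sumR_scal,
      <- (sumR_cube_translate n x0 (fun z => k ^ 2 * (h (xorv u z) - h z) ^ 2) Hx0).
    apply sumR_ext. intros y Hy. cbv beta.
    unfold u. rewrite xorv_cancel by (rewrite ?(cube_elem_length _ _ Hy); lia).
    rewrite !hs_clipped by assumption. fold k. unfold h. ring. }
  assert (Hk2 : k ^ 2 = 4 * c ^ 2 / INR n).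
  { unfold k, alpha. replace ((2 * (c * sqrt (INR n)) / INR n) ^ 2)
      with (4 * c ^ 2 * (sqrt (INR n) * sqrt (INR n)) / (INR n * INR n)) by (field; lra).
    rewrite sqrt_sqrt by lra. field. lra. }
  pose proof (clipped_weight_shift_energy u) as Henergy. rewrite Hu in Henergy.
  fold alpha. rewrite Htranslate, Hk2.
  assert (0 < c ^ 2) by (apply pow_lt; lra).
  assert (0 < 2 ^ n) by (apply pow_lt; lra).
  apply Rle_trans with (4 * c ^ 2 / INR n * (weight u * 2 ^ n / 8)).
  - apply (Rmult_le_reg_l (INR n)); [exact HnR|].
    replace (INR n * (4 * c ^ 2 / INR n * (weight u * 2 ^ n / 8)))
      with (c ^ 2 * 2 ^ n / 8 * (4 * weight u)) by (field; lra).
    assert (HP : 0 < c ^ 2 * 2 ^ n / 8) by nra.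
    set (P := c ^ 2 * 2 ^ n / 8) in *. nra.
  - apply Rmult_le_compat_l; [|exact Henergy].
    apply Rmult_le_pos; [lra|]. apply Rlt_le, Rinv_0_lt_compat, HnR.
Qed.

(** * Volume of a Hamming ball of radius n/4 *)

Lemma sumR_pow_hweight (q : R) (n : nat) :
  sumR (cube n) (fun z => q ^ hweight z) = (1 + q) ^ n.
Proof.
  induction n as [|n IH]; [simpl; lra|].
  rewrite sumR_cube_S. cbn [hweight Nat.add pow].
  rewrite sumR_scal, IH. ring.
Qed.

(* Weighted indicator bound behind the Chernoff-type volume estimate. *)
Lemma small_weight_indicator_le (n w : nat) :
  (4 * w < n)%nat -> 1 <= (4 / 3) ^ n * ((3 / 4) ^ 4) ^ w.
Proof.
  intros H. replace n with (4 * w + (n - 4 * w))%nat by lia.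
  rewrite pow_add, <- pow_mult.
  replace ((4 / 3) ^ (4 * w) * (4 / 3) ^ (n - 4 * w) * (3 / 4) ^ (4 * w))
    with (((4 / 3) * (3 / 4)) ^ (4 * w) * (4 / 3) ^ (n - 4 * w))
    by (rewrite Rpow_mult_distr; ring).
  replace (4 / 3 * (3 / 4)) with 1 by field. rewrite pow1, Rmult_1_l.
  apply pow_R1_Rle. lra.
Qed.

Lemma hamming_ball_volume (n : nat) (x0 : list bool) :
  length x0 = n ->
  sumR (cube n) (fun x => if Rlt_dec (4 * weight (xorv x0 x)) (INR n) then 1 else 0)
  <= (337 / 192) ^ n.
Proof.
  intros Hl.
  apply Rle_trans with
    (sumR (cube n) (fun x => (4 / 3) ^ n * ((3 / 4) ^ 4) ^ hweight (xorv x0 x))).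
  - apply sumR_le. intros x _. destruct Rlt_dec as [H|H].
    + apply small_weight_indicator_le. apply INR_lt.
      rewrite mult_INR, <- weight_hweight. simpl (INR 4). lra.
    + apply Rmult_le_pos; apply pow_le; lra.
  - rewrite sumR_scal, (sumR_cube_translate n x0 (fun z => ((3 / 4) ^ 4) ^ hweight z) Hl).
    rewrite sumR_pow_hweight, <- Rpow_mult_distr. right. f_equal. field.
Qed.

(** * Counting messages *)

Fixpoint short_msgs (k : nat) : list (list bool) :=
  match k with
  | O => cube 0
  | S k' => short_msgs k' ++ cube (S k')
  end.

Lemma in_short_msgs (k : nat) (m : list bool) : (length m <= k)%nat -> In m (short_msgs k).
Proof.
  induction k as [|k IH]; intros H; cbn [short_msgs].
  - destruct m; [now left|simpl in H; lia].
  - apply in_or_app. destruct (Nat.eq_dec (length m) (S k)) as [E|E].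
    + right. rewrite <- E. apply in_cube.
    + left. apply IH. lia.
Qed.

Lemma length_short_msgs (k : nat) : INR (length (short_msgs k)) = 2 ^ S k - 1.
Proof.
  induction k as [|k IH]; [simpl; lra|].
  cbn [short_msgs]. rewrite length_app, plus_INR, IH, length_cube, pow_INR.
  simpl (INR 2). replace (1 + 1) with 2 by lra. simpl. lra.
Qed.

Lemma length_le_proto_cost (n : nat) (M : list bool -> list bool) (x : list bool) :
  In x (cube n) -> (length (M x) <= proto_cost n M)%nat.
Proof.
  unfold proto_cost. induction (cube n) as [|a l IH]; simpl; intros H; [easy|].
  destruct H as [<-|H]; [lia|]. specialize (IH H). lia.
Qed.

Lemma sumR_by_messages {A} (C : list A) (w : A -> R) (M : A -> list bool) (k : nat) (V : R) :
  (forall x, In x C -> 0 <= w x) ->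
  (forall x, In x C -> (length (M x) <= k)%nat) ->
  (forall m, sumR C (fun x => if list_eq_dec bool_dec (M x) m then w x else 0) <= V) ->
  sumR C w <= (2 ^ S k - 1) * V.
Proof.
  intros Hw Hlen Hfiber. set (fib := fun x m => if list_eq_dec bool_dec (M x) m then w x else 0).
  assert (Hfib0 : forall x m, In x C -> 0 <= fib x m).
  { intros x m Hx. unfold fib. destruct list_eq_dec; [apply Hw, Hx|lra]. }
  apply Rle_trans with (sumR C (fun x => sumR (short_msgs k) (fib x))).
  - apply sumR_le. intros x Hx.
    replace (w x) with (fib x (M x)) by (unfold fib; now destruct list_eq_dec).
    apply sumR_term_le; [apply in_short_msgs, Hlen, Hx|intros; now apply Hfib0].
  - rewrite sumR_swap, <- length_short_msgs, <- sumR_const.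
    apply sumR_le. intros m _. apply Hfiber.
Qed.

Lemma pow_two_succ_le_four (k : nat) : 2 ^ S k - 1 <= 4 ^ k.
Proof.
  induction k as [|k IH]; [simpl; lra|].
  assert (1 <= 4 ^ k) by (apply pow_R1_Rle; lra).
  simpl in *. lra.
Qed.

(* The final numerical step: 15/16 2^n <= (2^(k+1) - 1) (337/192)^n forces
   k >= n/16, since (384/337)^16 >= 4. *)
Lemma message_length_bound (n k : nat) :
  (1 <= n)%nat -> 15 / 16 * 2 ^ n <= (2 ^ S k - 1) * (337 / 192) ^ n ->
  INR n / 16 <= INR k.
Proof.
  intros Hn H. set (q := 384 / 337). set (r := 337 / 192).
  assert (Hqr : 2 ^ n = q ^ n * r ^ n)
    by (rewrite <- Rpow_mult_distr; unfold q, r; f_equal; field).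
  assert (Hr : 0 < r ^ n) by (apply pow_lt; unfold r; lra).
  assert (Hq : 1 <= q) by (unfold q; lra).
  assert (Hq16 : 4 <= q ^ 16) by (unfold q; simpl; lra).
  destruct (Rle_dec (INR n / 16) (INR k)) as [|Hlt]; [assumption|exfalso].
  assert (Hk : (16 * k < n)%nat).
  { apply Rnot_le_lt in Hlt. apply INR_lt. rewrite mult_INR. simpl (INR 16). lra. }
  assert (Hqn : q * (q ^ 16) ^ k <= q ^ n).
  { rewrite <- pow_mult, <- (pow_1 q) at 1. rewrite <- pow_add. apply Rle_pow; [exact Hq|lia]. }
  assert (H4 : 4 ^ k <= (q ^ 16) ^ k) by (apply pow_incr; lra).
  assert (Hmsg : 15 / 16 * q ^ n <= 2 ^ S k - 1).
  { rewrite Hqr in H. fold r in H. apply (Rmult_le_reg_r (r ^ n)); [exact Hr|]. lra. }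
  pose proof (pow_two_succ_le_four k).
  assert (0 < 4 ^ k) by (apply pow_lt; lra).
  unfold q in *. nra.
Qed.

Section HockeyStickProtocol.

Variables (n : nat) (c : R) (M : list bool -> list bool) (B : list bool -> list bool -> R).
Hypotheses (Hn : (0 < n)%nat) (Hc : 0 < c).

Local Notation F := (xor_fun (hs n (c * sqrt (INR n)))).

Definition row_error (x : list bool) : R :=
  sumR (cube n) (fun y => (B (M x) y - F x y) ^ 2).

Definition error_threshold : R := c ^ 2 * 2 ^ n / 64.

Definition good (x : list bool) : R :=
  if Rle_dec (row_error x) error_threshold then 1 else 0.

Lemma good_nonneg (x : list bool) : In x (cube n) -> 0 <= good x.
Proof. intros _. unfold good. destruct Rle_dec; lra. Qed.

Lemma many_good_inputs :
  proto_err n F M B <= c ^ 2 / 1024 -> 15 / 16 * 2 ^ n <= sumR (cube n) good.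
Proof.
  intros Herr. set (N := 2 ^ n).
  assert (HN : 0 < N) by (apply pow_lt; lra).
  assert (Hc2 : 0 < c ^ 2) by (apply pow_lt; lra).
  assert (HT : 0 < error_threshold) by (unfold error_threshold; fold N; nra).
  assert (Htotal : sumR (cube n) row_error <= c ^ 2 / 1024 * (N * N)).
  { unfold proto_err in Herr. fold N in Herr.
    apply (Rmult_le_reg_l (/ (N * N))); [apply Rinv_0_lt_compat; nra|].
    replace (/ (N * N) * (c ^ 2 / 1024 * (N * N))) with (c ^ 2 / 1024) by (field; lra).
    exact Herr. }
  assert (Hnonneg : forall x, In x (cube n) -> 0 <= row_error x)
    by (intros; apply sumR_nonneg; intros; apply pow2_ge_0).
  pose proof (markov_count (cube n) row_error error_threshold HT Hnonneg) as Hmarkov.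
  rewrite length_cube, pow_INR in Hmarkov. simpl (INR 2) in Hmarkov.
  replace (1 + 1) with 2 in Hmarkov by lra. fold N in Hmarkov.
  assert (Hfrac : sumR (cube n) row_error / error_threshold <= N / 16).
  { apply (Rmult_le_reg_r error_threshold); [exact HT|].
    unfold Rdiv at 1. rewrite Rmult_assoc, Rinv_l, Rmult_1_r by lra.
    unfold error_threshold. fold N. nra. }
  unfold good. lra.
Qed.

Lemma same_message_close (x x0 : list bool) :
  In x (cube n) -> In x0 (cube n) ->
  row_error x <= error_threshold -> row_error x0 <= error_threshold ->
  M x = M x0 -> 4 * weight (xorv x0 x) < INR n.
Proof.
  intros Hx Hx0 Gx Gx0 HM.
  destruct (Rlt_dec (4 * weight (xorv x0 x)) (INR n)) as [|Hfar]; [assumption|exfalso].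
  pose proof (hockey_stick_separation n c x x0 Hn Hc (cube_elem_length _ _ Hx)
                (cube_elem_length _ _ Hx0) (Rnot_lt_le _ _ Hfar)) as Hsep.
  pose proof (sumR_sq_diff_le (cube n) (F x) (F x0) (B (M x))) as Hpar.
  unfold row_error in Gx, Gx0. rewrite HM in Gx. rewrite HM in Hpar.
  unfold xor_fun in Hpar, Gx, Gx0. unfold error_threshold in *.
  assert (0 < c ^ 2 * 2 ^ n) by (apply Rmult_lt_0_compat; apply pow_lt; lra).
  lra.
Qed.

Lemma good_fiber_bound (m : list bool) :
  sumR (cube n) (fun x => if list_eq_dec bool_dec (M x) m then good x else 0)
  <= (337 / 192) ^ n.
Proof.
  destruct (classic (exists x0, In x0 (cube n) /\ row_error x0 <= error_threshold /\ M x0 = m))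
    as [[x0 [Hx0 [G0 HM0]]]|Hnone].
  - eapply Rle_trans; [|apply (hamming_ball_volume n x0 (cube_elem_length _ _ Hx0))].
    apply sumR_le. intros x Hx. unfold good.
    destruct list_eq_dec as [HM|]; [|destruct Rlt_dec; lra].
    destruct Rle_dec as [Gx|]; [|destruct Rlt_dec; lra].
    destruct Rlt_dec as [|Hnot]; [lra|].
    exfalso. apply Hnot, same_message_close; congruence.
  - apply Rle_trans with (sumR (cube n) (fun _ => 0)).
    + right. apply sumR_ext. intros x Hx. unfold good.
      destruct list_eq_dec; [|reflexivity]. destruct Rle_dec; [|reflexivity].
      exfalso. apply Hnone. now exists x.
    + rewrite sumR_cube_const, Rmult_0_r. apply pow_le. lra.
Qed.

End HockeyStickProtocol.

Theorem mainTheorem19 :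
  forall c : R, 0 < c ->
  exists eps c' : R, 0 < eps /\ 0 < c' /\
    forall n : nat, Nat.Odd n ->
      D_one_way_ge n eps (xor_fun (hs n (c * sqrt (INR n)))) (c' * INR n).
Proof.
  intros c Hc. exists (c ^ 2 / 1024), (1 / 16).
  assert (0 < c ^ 2) by (apply pow_lt; lra).
  split; [lra|]. split; [lra|].
  intros n _ M B Herr.
  destruct (Nat.eq_dec n 0) as [->|Hn0].
  { simpl. rewrite Rmult_0_r. apply pos_INR. }
  assert (Hn : (0 < n)%nat) by lia.
  pose proof (many_good_inputs n c M B Hc Herr) as Hmany.
  pose proof (sumR_by_messages (cube n) (good n c M B) M (proto_cost n M) ((337 / 192) ^ n)
                (good_nonneg n c M B) (length_le_proto_cost n M)
                (good_fiber_bound n c M B Hn Hc)) as Hfew.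
  pose proof (message_length_bound n (proto_cost n M) Hn ltac:(lra)).
  lra.
Qed.
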